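(* For every $t\ge0$ and every color $c$ that EB-1WL can assign after $t$ rounds, there is a $\mathrm{CFOC}^3$ formula $\phi_c(x,y)$ of quantifier depth $t$ such that for every graph $G=(V,E)$ and every ordered edge $(u,v)$ of $G$: $\mathrm{eb}^{(t)}(G,(u,v))=c$ if and only if $G\models\phi_c(u,v)$.
   Context: All graphs are finite, simple and undirected, without isolated vertices; $N(v)$ denotes the neighborhood of $v$. An ordered edge of $G=(V,E)$ is a pair $(u,v)$ with $\{u,v\}\in E$. EB-1WL coloring: $\mathrm{eb}^{(0)}(G,(u,v))=1$ for every ordered edge, and $\mathrm{eb}^{(\ell+1)}(G,(u,v)) = \big(\mathrm{eb}^{(\ell)}(G,(u,v)),\ \{\!\{\mathrm{eb}^{(\ell)}(G,(u,x)) : x\in N(u)\}\!\},\ \{\!\{(\mathrm{eb}^{(\ell)}(G,(u,y)),\mathrm{eb}^{(\ell)}(G,(v,y))) : y\in N(u)\cap N(v)\}\!\},\ \{\!\{\mathrm{eb}^{(\ell)}(G,(v,z)) : z\in N(v)\}\!\}\big)$. Logic: first-order logic over the vocabulary with one binary relation $E$, where $E(x,y)$ holds of $(u,v)$ iff $\{u,v\}$ is an edge. For a tuple $\bar x=(x_1,\dots,x_n)$ of distinct variables, $\mathrm{clique}(\bar x):=\bigwedge_{1\le i<j\le n}E(x_i,x_j)$ (empty conjunction = true). CFOC is the smallest set of formulas such that: (1) $\mathrm{clique}(\bar x)$ is in CFOC; (2) if $\phi(\bar x)\in$ CFOC then $\mathrm{clique}(\bar x)\wedge\neg\phi(\bar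 x)\in$ CFOC; (3) if $\phi(\bar x),\psi(\bar y)\in$ CFOC then $\mathrm{clique}(\bar z)\wedge(\phi(\bar x)\star\psi(\bar y))\in$ CFOC for $\star\in\{\wedge,\vee\}$, where $\bar z$ lists each variable of $\bar x$ and $\bar y$ exactly once; (4) if $\phi(\bar x,y)\in$ CFOC then $\mathrm{clique}(\bar x)\wedge\exists^{\ge k}y\,\phi(\bar x,y)\in$ CFOC for every integer $k\ge1$ ($\exists^{\ge k}$: at least $k$ witnesses). $\phi(\bar x)$ means the free variables of $\phi$ are exactly $\bar x$. $\mathrm{CFOC}^3$: CFOC formulas using at most three distinct variables. Quantifier depth is the maximal nesting depth of counting quantifiers. *)

From mathcomp Require Import all_boot.
Set Implicit Arguments.
Unset Strict Implicit.
Unset Printing Implicit Defensive.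

Definition is_graph (T : finType) (e : rel T) : Prop :=
  symmetric e /\ irreflexive e /\ (forall v : T, exists w : T, e v w).

(* Colours are encoded injectively as finite trees with nat labels.
   Multisets are encoded canonically as lists sorted by the injective
   code [pickle] (so two lists give the same sorted list iff they are
   permutations of each other, i.e. the same multiset). *)
Definition color := GenTree.tree nat.

Definition msort (s : seq color) : seq color :=
  sort (fun a b : color => pickle a <= pickle b) s.

Definition cpair (a b : color) : color := GenTree.Node 4 [:: a; b].

Fixpoint eb (T : finType) (e : rel T) (t : nat) (u v : T) : color :=
  match t with
  | 0 => GenTree.Node 0 [::]
  | t'.+1 =>
      GenTree.Node 1
        [:: eb e t' u v;
            GenTree.Node 2 (msort [seq eb e t' u x | x <- enum T & e u x]);
            GenTree.Node 3 (msort [seq cpair (eb e t' u y) (eb e t' v y)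
                                  | y <- enum T & e u y && e v y]);
            GenTree.Node 5 (msort [seq eb e t' v z | z <- enum T & e v z])]
  end.

Definition var := nat.

Inductive form : Type :=
  | FTrue : form
  | FE : var -> var -> form
  | FNeg : form -> form
  | FAnd : form -> form -> form
  | FOr : form -> form -> form
  | FEx : nat -> var -> form -> form.

Definition upd (T : Type) (rho : var -> T) (y : var) (w : T) : var -> T :=
  fun z => if z == y then w else rho z.

Fixpoint sat (T : finType) (e : rel T) (rho : var -> T) (f : form) : bool :=
  match f with
  | FTrue => true
  | FE x y => e (rho x) (rho y)
  | FNeg g => ~~ sat e rho g
  | FAnd g h => sat e rho g && sat e rho h
  | FOr g h => sat e rho g || sat e rho h
  | FEx k y g => k <= #|[pred w : T | sat e (upd rho y w) g]|
  end.

Fixpoint vars (f : form) : seq var :=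
  match f with
  | FTrue => [::]
  | FE x y => [:: x; y]
  | FNeg g => vars g
  | FAnd g h | FOr g h => vars g ++ vars h
  | FEx _ y g => y :: vars g
  end.

Fixpoint qdepth (f : form) : nat :=
  match f with
  | FTrue | FE _ _ => 0
  | FNeg g => qdepth g
  | FAnd g h | FOr g h => maxn (qdepth g) (qdepth h)
  | FEx _ _ g => (qdepth g).+1
  end.

Fixpoint clique (xs : seq var) : form :=
  match xs with
  | [::] => FTrue
  | x :: xs' => foldr (fun y acc => FAnd (FE x y) acc) (clique xs') xs'
  end.

(* CFOC f xs : f is a CFOC formula whose (declared) tuple of free
   variables is xs (a tuple of distinct variables).  The tuple is
   regarded up to reordering (rule cf_perm). *)
Inductive CFOC : form -> seq var -> Prop :=
  | cf_clique xs : uniq xs -> CFOC (clique xs) xs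
  | cf_neg f xs : CFOC f xs -> CFOC (FAnd (clique xs) (FNeg f)) xs
  | cf_and f xs g ys zs :
      CFOC f xs -> CFOC g ys -> uniq zs ->
      (forall z, (z \in zs) = (z \in xs) || (z \in ys)) ->
      CFOC (FAnd (clique zs) (FAnd f g)) zs
  | cf_or f xs g ys zs :
      CFOC f xs -> CFOC g ys -> uniq zs ->
      (forall z, (z \in zs) = (z \in xs) || (z \in ys)) ->
      CFOC (FAnd (clique zs) (FOr f g)) zs
  | cf_ex f xs y k :
      CFOC f (rcons xs y) -> 1 <= k ->
      CFOC (FAnd (clique xs) (FEx k y f)) xs
  | cf_perm f xs ys : CFOC f xs -> perm_eq xs ys -> CFOC f ys.

Definition CFOC3 (f : form) (xs : seq var) : Prop :=
  CFOC f xs /\ size (undup (vars f)) <= 3.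

From mathcomp Require Import all_boot zify.

(* By induction on [t], for any three distinct variables [x y z], the property
   "[E(x,y)] and [eb^(t)(x,y) = c]" is CFOC-definable with free tuple [(x,y)]
   inside {x,y,z}.  A colour of round [t+1] is the old colour of [(x,y)] plus
   three multisets of round-[t] colours, witnessed by a neighbour [z] of [x], of
   [y], or of both.  Since [c] is realised, these multisets are known lists [L];
   such a multiset is pinned down by saying, for each [d] in [L], that exactly
   [count_mem d L] witnesses [z] have colour [d], and that no witness has a
   colour outside [L].  The colour of [(x,z)] is expressed by the induction
   hypothesis with [y] as the spare variable, so three variables suffice and
   each round costs one counting quantifier. *)

Set Implicit Arguments.
Unset Strict Implicit.
Unset Printing Implicit Defensive.

Lemma perm_eq_counts (T : eqType) (s L : seq T) :
  perm_eq s L = all (fun d => count_mem d s == count_mem d L) L && all (mem L) s.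
Proof.
apply/idP/andP => [sL | [/allP countsL /allP sL]].
  split; first by apply/allP => d _; rewrite (permP sL).
  by apply/allP => d; rewrite (perm_mem sL).
rewrite /perm_eq all_cat; apply/andP; split; apply/allP => d; last exact: countsL.
by move=> /sL; exact: countsL.
Qed.

Lemma msort_eq (s1 s2 : seq color) : (msort s1 == msort s2) = perm_eq s1 s2.
Proof.
rewrite /msort; set le := fun a b : color => pickle a <= pickle b.
have le_tr : transitive le by move=> a b c; apply: leq_trans.
have le_anti : antisymmetric le by move=> a b /anti_leq /(pcan_inj (@pickleK _)).
have le_total : total le by move=> a b; apply: leq_total.
apply/eqP/idP => [eq12 | s12]; first by rewrite -(perm_sort le s1) eq12 perm_sort.
apply: (sorted_eq le_tr le_anti); rewrite ?sort_sorted //.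
by rewrite perm_sort perm_sym perm_sort perm_sym.
Qed.

Lemma cpair_eq (a b a' b' : color) : (cpair a b == cpair a' b') = (a == a') && (b == b').
Proof. by apply/eqP/andP => [[-> ->] | [/eqP -> /eqP ->]]. Qed.

Lemma eb_succ_eq (T T' : finType) (e : rel T) (e' : rel T') t u v u' v' :
  (eb e t.+1 u v == eb e' t.+1 u' v') =
  [&& eb e t u v == eb e' t u' v',
      perm_eq [seq eb e t u w | w <- enum T & e u w] [seq eb e' t u' w | w <- enum T' & e' u' w],
      perm_eq [seq cpair (eb e t u w) (eb e t v w) | w <- enum T & e u w && e v w]
              [seq cpair (eb e' t u' w) (eb e' t v' w) | w <- enum T' & e' u' w && e' v' w] &
      perm_eq [seq eb e t v w | w <- enum T & e v w] [seq eb e' t v' w | w <- enum T' & e' v' w]].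
Proof.
rewrite -!msort_eq /=.
by apply/eqP/and4P => [[-> -> -> ->] | [/eqP -> /eqP -> /eqP -> /eqP ->]].
Qed.

Lemma sat_clique (T : finType) (e : rel T) (rho : var -> T) (zs : seq var) :
  sat e rho (clique zs) = pairwise (fun a b => e (rho a) (rho b)) zs.
Proof.
elim: zs => //= x zs <-.
by elim: {2 3}zs => //= y ys ->; rewrite andbA.
Qed.

Lemma qdepth_clique (zs : seq var) : qdepth (clique zs) = 0.
Proof. by elim: zs => //= x zs IH; elim: {2}zs => //= y ys ->. Qed.

Lemma vars_clique (zs : seq var) : {subset vars (clique zs) <= zs}.
Proof.
elim: zs => //= x zs IH v.
have : {subset zs <= zs} by [].
elim: {1 4}zs => /= [_ /IH | y ys IHys /allP /= /andP[yzs /allP ys_zs]].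
  by rewrite inE orbC => ->.
by rewrite !inE => /or3P[-> // | /eqP-> | /IHys]; rewrite ?inE ?yzs ?orbT //; apply.
Qed.

Lemma CFOC_uniq (f : form) (xs : seq var) : CFOC f xs -> uniq xs.
Proof.
elim=> // [g ys y k _ | g ys ys' _ uniq_ys /perm_uniq <-] //.
by rewrite rcons_uniq => /andP[].
Qed.

Lemma upd_eq (T : Type) (rho : var -> T) (y : var) (w : T) : upd rho y w y = w.
Proof. by rewrite /upd eqxx. Qed.

Lemma upd_neq (T : Type) (rho : var -> T) (y : var) (w : T) (x : var) :
  x != y -> upd rho y w x = rho x.
Proof. by rewrite /upd => /negbTE ->. Qed.

Definition gprop := forall T : finType, rel T -> (var -> T) -> bool.

(* [P] is defined by a CFOC formula with free tuple [zs], depth [n] and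
   variables in [S]; the formula is only required to agree with [P] where the
   clique on [zs] holds, as every CFOC formula implies that clique. *)
Definition expressible (S zs : seq var) (n : nat) (P : gprop) : Prop :=
  {subset zs <= S} /\
  exists f, [/\ CFOC f zs, all (mem S) (vars f), qdepth f = n &
    forall (T : finType) (e : rel T) (rho : var -> T),
      sat e rho f = sat e rho (clique zs) && P T e rho].

Section Expressible.

Variable S : seq var.

Lemma expressible_sub (S' zs : seq var) n P :
  {subset S <= S'} -> expressible S zs n P -> expressible S' zs n P.
Proof.
move=> sub [zsS [f [cf fS df sf]]]; split=> [v /zsS /sub // | ].
by exists f; split=> //; apply: sub_all fS => v /sub.
Qed.

Lemma expressible_ext (zs : seq var) n (P Q : gprop) :
  (forall T e rho, sat e rho (clique zs) -> P T e rho = Q T e rho) ->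
  expressible S zs n P -> expressible S zs n Q.
Proof.
move=> PQ [zsS [f [cf fS df sf]]]; split=> //; exists f; split=> // T e rho.
by rewrite sf; case: (boolP (sat e rho _)) => // /PQ ->.
Qed.

Lemma expressible_clique (zs : seq var) :
  uniq zs -> {subset zs <= S} -> expressible S zs 0 (fun _ _ _ => true).
Proof.
move=> uniq_zs zsS; split=> //; exists (clique zs); split.
- exact: cf_clique.
- by apply/allP => v /vars_clique /zsS.
- exact: qdepth_clique.
- by move=> T e rho; rewrite andbT.
Qed.

Lemma expressible_neg (zs : seq var) n P :
  expressible S zs n P -> expressible S zs n (fun T e rho => ~~ P T e rho).
Proof.
move=> [zsS [f [cf fS df sf]]]; split=> //; exists (FAnd (clique zs) (FNeg f)); split.
- exact: cf_neg.
- by rewrite /= all_cat fS andbT; apply/allP => v /vars_clique /zsS.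
- by rewrite /= qdepth_clique max0n.
- by move=> T e rho; rewrite /= sf; case: (sat e rho _).
Qed.

Lemma expressible_and (xs zs : seq var) n m P Q :
  subseq xs zs -> expressible S xs n P -> expressible S zs m Q ->
  expressible S zs (maxn n m) (fun T e rho => P T e rho && Q T e rho).
Proof.
move=> xs_zs [_ [f [cf fS df sf]]] [zsS [g [cg gS dg sg]]]; split=> //.
exists (FAnd (clique zs) (FAnd f g)); split.
- apply: (cf_and cf cg) => [|v]; first exact: CFOC_uniq cg.
  by case: (boolP (v \in xs)) => // /(mem_subseq xs_zs) ->.
- by rewrite /= !all_cat fS gS !andbT; apply/allP => v /vars_clique /zsS.
- by rewrite /= qdepth_clique max0n df dg.
move=> T e rho; rewrite /= sf sg; case: (boolP (sat e rho _)) => //=.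
by rewrite !sat_clique => /(subseq_pairwise xs_zs) ->; rewrite andbC.
Qed.

Lemma expressible_ex (zs : seq var) y n k P : 0 < k ->
  expressible S (rcons zs y) n P ->
  expressible S zs n.+1 (fun T e rho =>
    k <= #|[pred w | sat e (upd rho y w) (clique (rcons zs y)) && P T e (upd rho y w)]|).
Proof.
move=> k_gt0 [zsS [f [cf fS df sf]]].
have sub_zs : {subset zs <= S} by move=> v v_zs; rewrite zsS // mem_rcons inE v_zs orbT.
split=> //; exists (FAnd (clique zs) (FEx k y f)); split.
- exact: cf_ex.
- rewrite /= all_cat /= fS andbT zsS ?mem_rcons ?mem_head // andbT.
  by apply/allP => v /vars_clique /sub_zs.
- by rewrite /= qdepth_clique max0n df.
- by move=> T e rho /=; congr (_ && (_ <= _)); apply: eq_card => w; rewrite !inE sf.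
Qed.

Lemma expressible_all (A : eqType) (zs : seq var) n (D : seq A) (P : A -> gprop) :
  uniq zs -> {subset zs <= S} -> (forall d, d \in D -> expressible S zs n (P d)) ->
  expressible S zs (if D is [::] then 0 else n) (fun T e rho => all (fun d => P d T e rho) D).
Proof.
move=> uniq_zs zsS; elim: D => [_ | d D IH PD]; first exact: expressible_clique.
have maxnE : maxn n (if D is [::] then 0 else n) = n by case: (D); rewrite ?maxn0 ?maxnn.
have PD' : forall d', d' \in D -> expressible S zs n (P d').
  by move=> d' d'D; apply: PD; rewrite inE d'D orbT.
by rewrite -{1}maxnE; apply: expressible_and (subseq_refl zs) (PD d (mem_head d D)) (IH PD').
Qed.

End Expressible.

Section WitnessColours.

Variables (S ws : seq var) (z : var) (F : forall T : finType, rel T -> (var -> T) -> color).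
Hypotheses (uniq_wsz : uniq (rcons ws z)) (wszS : {subset rcons ws z <= S}).

Definition witness_colours {T : finType} (e : rel T) (rho : var -> T) : seq color :=
  [seq F e (upd rho z w) | w <- enum T & sat e (upd rho z w) (clique (rcons ws z))].

Lemma card_witnesses (T : finType) (e : rel T) (rho : var -> T) (Q : pred color) :
  #|[pred w | sat e (upd rho z w) (clique (rcons ws z)) && Q (F e (upd rho z w))]| =
  count Q (witness_colours e rho).
Proof.
rewrite cardE /enum_mem size_filter count_map count_filter.
by rewrite enumT; apply: eq_count => w; rewrite /= andbC.
Qed.

Variable n : nat.

Lemma expressible_count_ge (d : color) (k : nat) : 0 < k ->
  expressible S (rcons ws z) n (fun T e rho => F e rho == d) ->
  expressible S ws n.+1 (fun T e rho => k <= count_mem d (witness_colours e rho)).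
Proof.
move=> k_gt0 /(expressible_ex k_gt0); apply: expressible_ext => T e rho _.
by rewrite (card_witnesses e rho (pred1 d)).
Qed.

Lemma expressible_count_eq (d : color) (m : nat) : 0 < m ->
  expressible S (rcons ws z) n (fun T e rho => F e rho == d) ->
  expressible S ws n.+1 (fun T e rho => count_mem d (witness_colours e rho) == m).
Proof.
move=> m_gt0 Fd.
have := expressible_and (subseq_refl ws) (expressible_count_ge m_gt0 Fd)
  (expressible_neg (expressible_count_ge (ltn0Sn m) Fd)).
by rewrite maxnn; apply: expressible_ext => T e rho _; rewrite -leqNgt -eqn_leq eq_sym.
Qed.

(* The colours outside [L] are excluded by one more counting quantifier, so
   the empty multiset still costs depth 1. *)
Lemma expressible_perm_eq (L : seq color) :
  (forall d, d \in L -> expressible S (rcons ws z) n (fun T e rho => F e rho == d)) ->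
  expressible S ws (if L is [::] then 1 else n.+1)
    (fun T e rho => perm_eq (witness_colours e rho) L).
Proof.
move=> FL.
have wsS : {subset ws <= S} by move=> v v_ws; rewrite wszS // mem_rcons inE v_ws orbT.
have uniq_ws : uniq ws by move: uniq_wsz; rewrite rcons_uniq => /andP[].
have count_gt0 d : d \in L -> 0 < count_mem d L by rewrite -has_count has_pred1.
have counts := expressible_all uniq_ws wsS (D := L)
  (P := fun d T e rho => count_mem d (witness_colours e rho) == count_mem d L)
  (fun d dL => expressible_count_eq (count_gt0 d dL) (FL d dL)).
have outside := expressible_all uniq_wsz wszS (D := L)
  (P := fun d T e rho => F e rho != d)
  (fun d dL => expressible_neg (FL d dL)).
have inside := expressible_neg (expressible_ex (ltn0Sn 0) outside).
have := expressible_and (subseq_refl ws) counts inside.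
have -> : maxn (if L is [::] then 0 else n.+1) (if L is [::] then 0 else n).+1 =
          (if L is [::] then 1 else n.+1) by case: (L); rewrite ?maxnn.
apply: expressible_ext => T e rho _.
rewrite (card_witnesses e rho (fun c => all (fun d => c != d) L)) perm_eq_counts -has_count.
have notinE c : all (fun d => c != d) L = (c \notin L).
  by elim: (L) => //= d L' ->; rewrite inE negb_or.
by rewrite -all_predC; congr (_ && _); apply: eq_all => c /=; rewrite notinE negbK.
Qed.

End WitnessColours.

Definition realized (t : nat) (c : color) : Prop :=
  exists (T : finType) (e : rel T) (u v : T), e u v /\ eb e t u v = c.

Lemma realized_eb (T : finType) (e : rel T) (t : nat) (u v : T) :
  e u v -> realized t (eb e t u v).
Proof. by move=> uv; exists T, e, u, v. Qed.

Definition is_colour (t : nat) (x y : var) (c : color) : gprop :=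
  fun T e rho => eb e t (rho x) (rho y) == c.

Lemma expressible_is_colour0 (x y z : var) (c : color) :
  uniq [:: x; y; z] -> realized 0 c -> expressible [:: x; y; z] [:: x; y] 0 (is_colour 0 x y c).
Proof.
rewrite /= !inE negb_or => /andP[/andP[xy _] _] [T0 [e0 [u0 [v0 [_ <-]]]]].
apply: expressible_ext (expressible_clique _ _) => [T e rho _ | | v].
- by rewrite /is_colour eqxx.
- by rewrite /= inE xy.
- by rewrite !inE => /orP[] ->; rewrite ?orbT.
Qed.

Section Step.

Variable t : nat.
Hypothesis IH : forall c, realized t c -> forall x y z : var,
  uniq [:: x; y; z] -> expressible [:: x; y; z] [:: x; y] t (is_colour t x y c).

Lemma expressible_is_colour_xz (x y z : var) (c : color) :
  uniq [:: x; y; z] -> realized t c -> expressible [:: x; y; z] [:: x; z] t (is_colour t x z c).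
Proof.
have xzy_xyz : perm_eq [:: x; z; y] [:: x; y; z] by rewrite perm_cons (perm_catC [:: z]).
rewrite -(perm_uniq xzy_xyz) => xzy /IH /(_ x z y xzy).
by apply: expressible_sub => v; rewrite (perm_mem xzy_xyz).
Qed.

Lemma expressible_nbr_colours (x y z : var) (L : seq color) :
  uniq [:: x; y; z] -> (forall d, d \in L -> realized t d) ->
  expressible [:: x; y; z] [:: x] (if L is [::] then 1 else t.+1)
    (fun T e rho => perm_eq [seq eb e t (rho x) w | w <- enum T & e (rho x) w] L).
Proof.
move=> xyz L_real.
have xz : x != z by apply: contraTneq xyz => ->; rewrite /= !inE eqxx orbT.
have uniq_xz : uniq (rcons [:: x] z) by rewrite /= inE xz.
have sub_xz : {subset rcons [:: x] z <= [:: x; y; z]}.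
  by move=> v; rewrite !inE => /orP[] ->; rewrite ?orbT.
apply: expressible_ext (expressible_perm_eq (F := fun T e rho => eb e t (rho x) (rho z))
  uniq_xz sub_xz _) => [T e rho _ | d /L_real /(expressible_is_colour_xz xyz) //].
congr perm_eq; rewrite /witness_colours.
rewrite (@eq_filter _ _ (fun w => e (rho x) w)) => [|w]; last first.
  by rewrite sat_clique /= upd_eq upd_neq // !andbT.
by apply: eq_map => w; rewrite upd_eq upd_neq.
Qed.

Lemma expressible_common_nbr_colours (x y z : var) (L : seq color) :
  uniq [:: x; y; z] ->
  (forall d, d \in L -> exists a b, [/\ d = cpair a b, realized t a & realized t b]) ->
  expressible [:: x; y; z] [:: x; y] (if L is [::] then 1 else t.+1)
    (fun T e rho => perm_eq [seq cpair (eb e t (rho x) w) (eb e t (rho y) w)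
                            | w <- enum T & e (rho x) w && e (rho y) w] L).
Proof.
move=> xyz L_pairs.
have yxz_xyz : perm_eq [:: y; x; z] [:: x; y; z] by rewrite (perm_catCA [:: y] [:: x] [:: z]).
have yxz : uniq [:: y; x; z] by rewrite (perm_uniq yxz_xyz).
have [xz yz] : x != z /\ y != z.
  by split; apply: contraTneq xyz => ->; rewrite /= !inE eqxx ?orbT ?andbF.
have xz_xyz : subseq [:: x; z] [:: x; y; z] by rewrite /= eqxx; case: eqP => //= _; rewrite eqxx.
have yz_xyz : subseq [:: y; z] [:: x; y; z] by apply: subseq_cons.
have sub_xyz : {subset rcons [:: x; y] z <= [:: x; y; z]} by [].
apply: expressible_ext (expressible_perm_eq (ws := [:: x; y]) (z := z)
  (F := fun T e rho => cpair (eb e t (rho x) (rho z)) (eb e t (rho y) (rho z))) xyz sub_xyz _).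
  move=> T e rho; rewrite sat_clique /= !andbT => exy; congr perm_eq; rewrite /witness_colours.
  rewrite (@eq_filter _ _ (fun w => e (rho x) w && e (rho y) w)) => [|w]; last first.
    by rewrite sat_clique /= upd_eq !upd_neq // exy !andbT.
  by apply: eq_map => w; rewrite upd_eq !upd_neq.
move=> d /L_pairs [a [b [-> a_real b_real]]].
have Ha := expressible_is_colour_xz xyz a_real.
have Hb : expressible [:: x; y; z] [:: y; z] t (is_colour t y z b).
  apply: expressible_sub (expressible_is_colour_xz yxz b_real) => v.
  by rewrite (perm_mem yxz_xyz).
have := expressible_and xz_xyz Ha
  (expressible_and yz_xyz Hb (expressible_clique xyz (fun v vS => vS))).
rewrite maxn0 maxnn; apply: expressible_ext => T e rho _.
by rewrite /is_colour cpair_eq andbT.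
Qed.

Lemma expressible_is_colour_succ (x y z : var) (c : color) :
  uniq [:: x; y; z] -> realized t.+1 c ->
  expressible [:: x; y; z] [:: x; y] t.+1 (is_colour t.+1 x y c).
Proof.
move=> xyz [T0 [e0 [u0 [v0 [uv0 <-]]]]].
set L1 := [seq eb e0 t u0 w | w <- enum T0 & e0 u0 w].
set L2 := [seq cpair (eb e0 t u0 w) (eb e0 t v0 w) | w <- enum T0 & e0 u0 w && e0 v0 w].
set L3 := [seq eb e0 t v0 w | w <- enum T0 & e0 v0 w].
have nbr_real a d : d \in [seq eb e0 t a w | w <- enum T0 & e0 a w] -> realized t d.
  by case/mapP => w; rewrite mem_filter => /andP[aw _] ->; exact: (realized_eb t aw).
have L2_pairs d : d \in L2 -> exists a b, [/\ d = cpair a b, realized t a & realized t b].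
  case/mapP => w; rewrite mem_filter => /andP[/andP[uw vw] _] ->.
  exists (eb e0 t u0 w), (eb e0 t v0 w).
  by split; [|exact: (realized_eb t uw)|exact: (realized_eb t vw)].
have yxz_xyz : perm_eq [:: y; x; z] [:: x; y; z] by rewrite (perm_catCA [:: y] [:: x] [:: z]).
have N1 := expressible_nbr_colours xyz (nbr_real u0).
have N3 : expressible [:: x; y; z] [:: y] (if L3 is [::] then 1 else t.+1)
    (fun T e rho => perm_eq [seq eb e t (rho y) w | w <- enum T & e (rho y) w] L3).
  have yxz : uniq [:: y; x; z] by rewrite (perm_uniq yxz_xyz).
  apply: expressible_sub (expressible_nbr_colours yxz (nbr_real v0)) => v.
  by rewrite (perm_mem yxz_xyz).
have N2 := expressible_common_nbr_colours xyz L2_pairs.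
have N0 := IH (realized_eb t uv0) xyz.
have x_xy : subseq [:: x] [:: x; y] by rewrite sub1seq mem_head.
have y_xy : subseq [:: y] [:: x; y] by rewrite sub1seq !inE eqxx orbT.
have depth_le (L : seq color) : (if L is [::] then 1 else t.+1) <= t.+1 by case: L.
have depth_L1 : (if L1 is [::] then 1 else t.+1) = t.+1.
  have : eb e0 t u0 v0 \in L1 by apply: map_f; rewrite mem_filter uv0 mem_enum.
  by case: (L1).
have := expressible_and (subseq_refl _) N0
  (expressible_and x_xy N1 (expressible_and y_xy N3 N2)).
have := depth_le L2; have := depth_le L3; rewrite depth_L1.
set d2 := (if L2 is [::] then 1 else t.+1); set d3 := (if L3 is [::] then 1 else t.+1).
move=> d3_le d2_le; have -> : maxn t (maxn t.+1 (maxn d3 d2)) = t.+1 by lia.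
apply: expressible_ext => T e rho _.
by rewrite /is_colour eb_succ_eq [_ && perm_eq _ L2]andbC.
Qed.

End Step.

Lemma expressible_is_colour (t : nat) (c : color) : realized t c ->
  forall x y z : var, uniq [:: x; y; z] ->
  expressible [:: x; y; z] [:: x; y] t (is_colour t x y c).
Proof.
elim: t c => [|t IH] c c_real x y z xyz; first exact: expressible_is_colour0.
exact: (expressible_is_colour_succ IH xyz c_real).
Qed.

Theorem mainTheorem6 :
  forall (t : nat) (c : color),
    (exists (T0 : finType) (e0 : rel T0) (u0 v0 : T0),
        is_graph e0 /\ e0 u0 v0 /\ eb e0 t u0 v0 = c) ->
    exists (phi : form) (x y : var),
      x != y /\ CFOC3 phi [:: x; y] /\ qdepth phi = t /\
      forall (T : finType) (e : rel T), is_graph e ->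
        forall (u v : T), e u v ->
          forall rho : var -> T, rho x = u -> rho y = v ->
            (eb e t u v = c <-> sat e rho phi).
Proof.
move=> t c [T0 [e0 [u0 [v0 [_ [uv0 c_eq]]]]]].
have c_real : realized t c by exists T0, e0, u0, v0.
have [_ [phi [cf phiS dphi sphi]]] :=
  expressible_is_colour c_real (x := 0) (y := 1) (z := 2) isT.
exists phi, 0, 1; split=> //; split.
  split=> //; apply: (@uniq_leq_size _ _ [:: 0; 1; 2]); first exact: undup_uniq.
  by move=> v; rewrite mem_undup => /(allP phiS).
split=> // T e _ u v uv rho rho_x rho_y.
by rewrite sphi /is_colour sat_clique /= rho_x rho_y uv /=; split=> [-> | /eqP].
Qed.
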